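(* For all integers $n\ge0$ and $p\ge0$, $$\mathcal{B}_{n+1,p}=(n+1)\mathcal{B}_{n,p}-\sum_{k=0}^{n-2}\binom{n}{k}(-1)^{n-k}\mathcal{B}_{k+1,p}-\frac{p}{p+1}\mathcal{B}_{n,p+1},$$ with $\mathcal{B}_{0,p}=1$ (the sum being empty when $n\le1$).
   Context: For an integer $p\ge0$, the $p$-Bell numbers $\mathcal{B}_{n,p}$ are defined by $\sum_{n\ge0}\mathcal{B}_{n,p}\frac{z^n}{n!}=\sum_{n\ge0}\binom{n+p}{p}^{-1}\frac{(e^z-1)^n}{n!}$. *)

From mathcomp Require Import all_boot all_order all_algebra.
Set Implicit Arguments. Unset Strict Implicit. Unset Printing Implicit Defensive.
Import Order.TTheory GRing.Theory Num.Theory.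
Local Open Scope ring_scope.

Definition exp_trunc (n : nat) : {poly rat} := \poly_(i < n.+1) (i`!%:R)^-1.

(* B_{n,p} = n! [z^n] sum_{k>=0} binom(k+p,p)^{-1} (e^z-1)^k / k!.
   Terms with k > n do not contribute to [z^n] since (e^z-1)^k = O(z^k),
   and truncating e^z at degree n does not change coefficient n. *)
Definition pBell (n p : nat) : rat :=
  n`!%:R * \sum_(k < n.+1)
     ((('C(k + p, p))%:R)^-1 / (k`!)%:R * ((exp_trunc n - 1) ^+ k)`_n).

From mathcomp Require Import all_boot all_order all_algebra.
From mathcomp Require Import ring zify.
Import Order.TTheory GRing.Theory Num.Theory.
Local Open Scope ring_scope.

(* Extracting the coefficient of z^n gives B_{n,p} = sum_k w(k,p) s(n,k) with
   w(k,p) = 1/(C(k+p,p) k!) = p!/(k+p)! and s(n,k) = k! S(n,k). Two identities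
   drive the recurrence: the binomial transform
   sum_j C(n,j) (-1)^(n-j) s(j+1,k+1) = (k+1) s(n,k), and
   (k+1) w(k+1,p) = w(k,p) - p/(p+1) w(k,p+1). Together they give
   sum_(j<=n) C(n,j) (-1)^(n-j) B_{j+1,p} = B_{n,p} - p/(p+1) B_{n,p+1};
   the terms j = n and j = n-1 of that sum are B_{n+1,p} and -n B_{n,p}. *)

Lemma natr_fact_neq0 (m : nat) : m`!%:R != 0 :> rat.
Proof. by rewrite pnatr_eq0 -lt0n fact_gt0. Qed.

Lemma natr_bin_neq0 (n m : nat) : (m <= n)%N -> 'C(n, m)%:R != 0 :> rat.
Proof. by rewrite pnatr_eq0 -lt0n bin_gt0. Qed.

Lemma coef_exp_truncX (N m j : nat) : (m <= N)%N ->
  (exp_trunc N ^+ j)`_m = j%:R ^+ m / m`!%:R.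
Proof.
elim: j m => [|j IHj] m le_mN.
  by rewrite expr0 coefC expr0n; case: m le_mN => [|m] _ //=; rewrite mul0r.
rewrite exprS coefM.
have termE (i : 'I_m.+1) : (exp_trunc N)`_i * (exp_trunc N ^+ j)`_(m - i)
    = 'C(m, i)%:R * j%:R ^+ (m - i) / m`!%:R.
  have le_im : (i <= m)%N := ltnSE (ltn_ord i).
  rewrite /exp_trunc coef_poly (leq_ltn_trans le_im) // IHj; last by lia.
  rewrite -(bin_fact le_im) !natrM.
  by field; rewrite !natr_fact_neq0 natr_bin_neq0.
rewrite (eq_bigr _ (fun i _ => termE i)) -big_distrl /=.
rewrite -[j.+1]addn1 natrD exprDn; congr (_ / _).
by apply: eq_bigr => i _; rewrite expr1n mulr1 mulr_natl.
Qed.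

(* k! S(n, k): by inclusion-exclusion, the number of surjections from an
   n-set onto a k-set. *)
Definition nsurj (n k : nat) : rat :=
  \sum_(j < k.+1) 'C(k, j)%:R * (-1) ^+ (k - j) * j%:R ^+ n.

Lemma coef_exp_trunc_subr1X (N m k : nat) : (m <= N)%N ->
  ((exp_trunc N - 1) ^+ k)`_m = nsurj m k / m`!%:R.
Proof.
move=> le_mN; rewrite addrC exprDn coef_sum /nsurj big_distrl /=.
apply: eq_bigr => i _.
rewrite -polyCN -rmorphXn coefMn coefCM coef_exp_truncX // -mulr_natl; ring.
Qed.

Lemma nsurj_eq0 (n k : nat) : (n < k)%N -> nsurj n k = 0.
Proof.
move=> lt_nk.
(* exp_trunc n - 1 vanishes at 0, so its k-th power is a multiple of 'X^k. *)
have : root (exp_trunc n - 1) 0.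
  by rewrite /root horner_coef0 coefB coef1 coef_poly fact0 invr1 subrr.
case/factor_theorem => q qE.
have := @coef_exp_trunc_subr1X n n k (leqnn n).
rewrite qE subr0 exprMn coefMXn lt_nk => /esym/eqP.
by rewrite mulf_eq0 invr_eq0 (negbTE (natr_fact_neq0 _)) orbF => /eqP.
Qed.

Definition bell_weight (k p : nat) : rat := ('C(k + p, p)%:R)^-1 / k`!%:R.

Lemma bell_weightE (k p : nat) : bell_weight k p = p`!%:R / (k + p)`!%:R.
Proof.
rewrite /bell_weight -(bin_fact (leq_addl k p)) addnK !natrM.
by field; rewrite !natr_fact_neq0 natr_bin_neq0 ?leq_addl.
Qed.

Lemma bell_weightS (k p : nat) :
  k.+1%:R * bell_weight k.+1 p
  = bell_weight k p - p%:R / p.+1%:R * bell_weight k p.+1.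
Proof.
rewrite !bell_weightE addSn addnS !factS !natrM -!natr1 natrD.
have hkp : k%:R + p%:R + 1 != 0 :> rat by rewrite -natrD natr1 pnatr_eq0.
by field; rewrite hkp natr_fact_neq0 natr1 pnatr_eq0.
Qed.

Lemma pBellE (p : nat) {n N : nat} : (n < N)%N ->
  pBell n p = \sum_(k < N) bell_weight k p * nsurj n k.
Proof.
move=> lt_nN; rewrite /pBell big_distrr /=.
transitivity (\sum_(k < n.+1) bell_weight k p * nsurj n k).
  apply: eq_bigr => k _; rewrite coef_exp_trunc_subr1X // /bell_weight.
  by field; rewrite !natr_fact_neq0 natr_bin_neq0 ?leq_addl.
rewrite (big_ord_widen _ (fun k => bell_weight k p * nsurj n k) lt_nN).
rewrite big_mkcond /=; apply: eq_bigr => k _.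
by case: ltnP => // le_nk; rewrite nsurj_eq0 ?mulr0.
Qed.

Lemma nsurj0 (n : nat) : nsurj n.+1 0 = 0.
Proof. by rewrite /nsurj big_ord1 expr0n mulr0. Qed.

(* Both sides equal sum_i C(k+1, i) (-1)^(k+1-i) i (i-1)^n: expand (i-1)^n on
   the left, and use i C(k+1, i) = (k+1) C(k, i-1) on the right. *)
Lemma nsurj_binomial_shift (n k : nat) :
  \sum_(j < n.+1) 'C(n, j)%:R * (-1) ^+ (n - j) * nsurj j.+1 k.+1
  = k.+1%:R * nsurj n k.
Proof.
transitivity (\sum_(i < k.+2)
    'C(k.+1, i)%:R * (-1) ^+ (k.+1 - i) * i%:R * (-1 + i%:R : rat) ^+ n).
  rewrite /nsurj; under eq_bigr do rewrite big_distrr.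
  rewrite exchange_big; apply: eq_bigr => i _ /=.
  rewrite exprDn big_distrr; apply: eq_bigr => j _ /=.
  rewrite exprS -mulr_natl; ring.
rewrite big_ord_recl mulr0 mul0r add0r /nsurj big_distrr.
apply: eq_bigr => i _ /=.
have bin_diag : k.+1%:R * 'C(k, i)%:R = i.+1%:R * 'C(k.+1, i.+1)%:R :> rat.
  by rewrite -!natrM (mul_bin_diag k.+1 i).
have -> : -1 + i.+1%:R = i%:R :> rat by rewrite -natr1 addrC addrK.
rewrite /bump add1n subSS.
transitivity (i.+1%:R * 'C(k.+1, i.+1)%:R * ((-1) ^+ (k - i) * i%:R ^+ n)
               : rat).
  by ring.
by rewrite -bin_diag; ring.
Qed.

Lemma pBell_binomial_shift (n p : nat) :
  \sum_(j < n.+1) 'C(n, j)%:R * (-1) ^+ (n - j) * pBell j.+1 p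
  = pBell n p - p%:R / p.+1%:R * pBell n p.+1.
Proof.
under eq_bigr => j _ do
  rewrite (pBellE p (ltn_ord j : (j.+1 < n.+2)%N)) big_distrr.
rewrite exchange_big big_ord_recl /= big1 ?add0r => [|j _]; last first.
  by rewrite nsurj0 !mulr0.
rewrite (pBellE p (ltnSn n)) (pBellE p.+1 (ltnSn n)) big_distrr -sumrB.
apply: eq_bigr => k _; rewrite /bump add1n.
under eq_bigr do rewrite mulrCA.
rewrite -big_distrr /= nsurj_binomial_shift mulrA [bell_weight _ _ * _]mulrC.
by rewrite bell_weightS; ring.
Qed.

Lemma pBell0 (p : nat) : pBell 0 p = 1.
Proof.
rewrite (pBellE p (ltnSn 0)) big_ord1 /nsurj big_ord1 bell_weightE !mul1r.
by rewrite divff ?natr_fact_neq0.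
Qed.

Theorem mainTheorem8 (n p : nat) :
  pBell 0 p = 1 /\
  pBell n.+1 p =
    n.+1%:R * pBell n p
    - \sum_(0 <= k < n.-1) ('C(n, k))%:R * (-1) ^+ (n - k) * pBell k.+1 p
    - p%:R / (p.+1)%:R * pBell n p.+1.
Proof.
split; first exact: pBell0.
have := pBell_binomial_shift n p.
case: n => [|n]; first by rewrite big_ord1 big_geq //= !mul1r subr0 => ->.
rewrite big_mkord !big_ord_recr /= subnn subSnn binn binSn !expr1 !expr0 !mul1r.
move/(canRL (addKr _)) ->.
by rewrite -[n.+2%:R]natr1; ring.
Qed.
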